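(* Let $\mathcal{A}\in\mathbb{R}^{n\times n\times n}$ and $\mathcal{E}\in\mathbb{R}^{n\times n\times n}$ be such that $\mathcal{A}$ and $\tilde{\mathcal{A}}=\mathcal{A}+\mathcal{E}$ are piezoelectric-type tensors. Then $$\sqrt{(\lambda_{C\max}(\mathcal{A}))^2+\lambda_{Z\min}(\mathcal{S}_{\tilde{\mathcal{A}}}-\mathcal{S}_{\mathcal{A}})}\ \le\ \lambda_{C\max}(\tilde{\mathcal{A}})\ \le\ \sqrt{(\lambda_{C\max}(\mathcal{A}))^2+\lambda_{Z\max}(\mathcal{S}_{\tilde{\mathcal{A}}}-\mathcal{S}_{\mathcal{A}})}.$$ (In particular both quantities under the square roots are nonnegative.)
   Context: A tensor $\mathcal{A}=(a_{ijk})\in\mathbb{R}^{n\times n\times n}$ is piezoelectric-type if $a_{ijk}=a_{ikj}$ for all $i,j,k$. For such $\mathcal{A}$, $\lambda_{C\max}(\mathcal{A})=\max\{\sum_{i,j,k}a_{ijk}x_iy_jy_k:\ \mathbf{x},\mathbf{y}\in\mathbb{R}^n,\ \mathbf{x}^T\mathbf{x}=\mathbf{y}^T\mathbf{y}=1\}$ is its largest $C$-eigenvalue (a $C$-eigenvalue being a real $\lambda$ with unit $\mathbf{x},\mathbf{y}$ satisfying $\sum_{j,k}a_{ijk}y_jy_k=\lambda x_i$ and $\sum_{j,k}a_{jki}x_jy_k=\lambda y_i$ for all $i$). The symmetric fourth-order tensor $\mathcal{S}_{\mathcal{A}}=(\bar b_{i_1i_2i_3i_4})$ is defined by $\bar b_{i_1i_2i_3i_4}=\frac13(b_{i_1i_2i_3i_4}+b_{i_1i_3i_2i_4}+b_{i_1i_4i_2i_3})$,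 where $b_{i_1i_2i_3i_4}=\sum_{i=1}^n a_{ii_1i_2}a_{ii_3i_4}$. For a symmetric fourth-order tensor $\mathcal{T}=(t_{i_1i_2i_3i_4})$, a $Z$-eigenvalue is a real $\lambda$ with some $\mathbf{x}\in\mathbb{R}^n$, $\mathbf{x}^T\mathbf{x}=1$, such that $\sum_{i_2,i_3,i_4}t_{ii_2i_3i_4}x_{i_2}x_{i_3}x_{i_4}=\lambda x_i$ for all $i$; $\lambda_{Z\max}(\mathcal{T})$ and $\lambda_{Z\min}(\mathcal{T})$ denote the largest and smallest $Z$-eigenvalues, which equal respectively the maximum and minimum of $\mathcal{T}\mathbf{x}^4=\sum t_{i_1i_2i_3i_4}x_{i_1}x_{i_2}x_{i_3}x_{i_4}$ over unit vectors $\mathbf{x}\in\mathbb{R}^n$. *)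

From HB Require Import structures.
From mathcomp Require Import all_boot all_order all_algebra.
From mathcomp Require Import reals.
Set Implicit Arguments. Unset Strict Implicit. Unset Printing Implicit Defensive.
Import Order.TTheory GRing.Theory Num.Theory.
Local Open Scope ring_scope.

Definition tensor3 (R : realType) (n : nat) := 'I_n -> 'I_n -> 'I_n -> R.
Definition tensor4 (R : realType) (n : nat) := 'I_n -> 'I_n -> 'I_n -> 'I_n -> R.

Definition unit_vec (R : realType) (n : nat) (x : 'I_n -> R) : Prop :=
  \sum_(i < n) x i ^+ 2 = 1.

Definition piezo_type (R : realType) (n : nat) (A : tensor3 R n) : Prop :=
  forall i j k, A i j k = A i k j.

Definition C_eigenvalue (R : realType) (n : nat) (A : tensor3 R n) (l : R) : Prop :=
  exists x y : 'I_n -> R, unit_vec x /\ unit_vec y /\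
    (forall i, \sum_(j < n) \sum_(k < n) A i j k * y j * y k = l * x i) /\
    (forall i, \sum_(j < n) \sum_(k < n) A j k i * x j * y k = l * y i).

Definition is_lambda_Cmax (R : realType) (n : nat) (A : tensor3 R n) (l : R) : Prop :=
  C_eigenvalue A l /\ forall l', C_eigenvalue A l' -> l' <= l.

Definition B_of (R : realType) (n : nat) (A : tensor3 R n) : tensor4 R n :=
  fun i1 i2 i3 i4 => \sum_(i < n) A i i1 i2 * A i i3 i4.

Definition S_of (R : realType) (n : nat) (A : tensor3 R n) : tensor4 R n :=
  fun i1 i2 i3 i4 =>
    3^-1 * (B_of A i1 i2 i3 i4 + B_of A i1 i3 i2 i4 + B_of A i1 i4 i2 i3).

Definition sub4 (R : realType) (n : nat) (T U : tensor4 R n) : tensor4 R n :=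
  fun i1 i2 i3 i4 => T i1 i2 i3 i4 - U i1 i2 i3 i4.

Definition add3 (R : realType) (n : nat) (A E : tensor3 R n) : tensor3 R n :=
  fun i j k => A i j k + E i j k.

Definition Z_eigenvalue (R : realType) (n : nat) (T : tensor4 R n) (l : R) : Prop :=
  exists x : 'I_n -> R, unit_vec x /\
    forall i, \sum_(i2 < n) \sum_(i3 < n) \sum_(i4 < n)
                T i i2 i3 i4 * x i2 * x i3 * x i4 = l * x i.

Definition is_lambda_Zmax (R : realType) (n : nat) (T : tensor4 R n) (l : R) : Prop :=
  Z_eigenvalue T l /\ forall l', Z_eigenvalue T l' -> l' <= l.

Definition is_lambda_Zmin (R : realType) (n : nat) (T : tensor4 R n) (l : R) : Prop :=
  Z_eigenvalue T l /\ forall l', Z_eigenvalue T l' -> l <= l'.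

From HB Require Import structures.
From mathcomp Require Import all_boot all_order all_algebra.
From mathcomp Require Import all_classical all_reals all_analysis.
From mathcomp Require Import ring lra.
Import Order.TTheory GRing.Theory Num.Theory.
Import numFieldNormedType.Exports.
Local Open Scope classical_set_scope.
Local Open Scope ring_scope.

(* Let q_A(y) = |A y^2|^2 for a piezoelectric-type tensor A; then S_A y^4 = q_A(y)
   and the gradient of q_A is 4 S_A y^3.  A C-eigentriple (l, x, y) gives
   q_A(y) = l^2, and conversely at a maximiser y of q_A on the unit sphere the
   Lagrange condition S_A y^3 = q_A(y) y makes sqrt(q_A(y)) a C-eigenvalue, with
   x = A y^2 / sqrt(q_A(y)).  So lambda_Cmax(A)^2 is the maximum of q_A on the
   sphere, and likewise the extreme Z-eigenvalues of S_A~ - S_A are the extreme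
   values of q_A~ - q_A there.  Evaluating q_A~ = q_A + (q_A~ - q_A) at the
   maximisers of q_A~ and of q_A gives the two bounds. *)

Set Implicit Arguments.
Unset Strict Implicit.
Unset Printing Implicit Defensive.

Section NonnegQuartic.
Variable R : realFieldType.

Lemma nonneg_quartic_lin_ge0 (c1 c2 c3 c4 : R) :
  (forall t, 0 <= c1 * t + c2 * t ^+ 2 + c3 * t ^+ 3 + c4 * t ^+ 4) -> 0 <= c1.
Proof.
move=> p_ge0; rewrite leNgt; apply/negP => c1_lt0.
pose K := `|c2| + `|c3| + `|c4|.
have K_ge0 : 0 <= K by rewrite !addr_ge0.
pose t := - c1 / (K - c1 + 1).
have t_gt0 : 0 < t by rewrite divr_gt0 ?oppr_gt0 //; lra.
have t_le1 : t <= 1 by rewrite ler_pdivrMr ?mul1r; lra.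
have tK_lt : t * K < - c1.
  by rewrite mulrAC ltr_pdivrMr; [nra | lra].
have t3 : t ^+ 3 <= t ^+ 2.
  by apply: ler_wiXn2l => //; exact: ltW.
have t4 : t ^+ 4 <= t ^+ 2.
  by apply: ler_wiXn2l => //; exact: ltW.
have bound k (c : R) : (2 <= k)%N -> c * t ^+ k <= `|c| * t ^+ 2.
  move=> k_ge2; apply: le_trans (_ : `|c| * t ^+ k <= _).
    by rewrite ler_wpM2r ?exprn_ge0 ?ler_norm // ltW.
  by rewrite ler_wpM2l //; apply: ler_wiXn2l => //; exact: ltW.
have p_lt0 : c1 * t + K * t ^+ 2 < 0.
  by rewrite expr2; nra.
have := p_ge0 t; have := bound 2%N c2 isT; have := bound 3%N c3 isT.
have := bound 4%N c4 isT; rewrite /K in p_lt0; lra.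
Qed.

Lemma nonneg_quartic_lin_eq0 (c1 c2 c3 c4 : R) :
  (forall t, 0 <= c1 * t + c2 * t ^+ 2 + c3 * t ^+ 3 + c4 * t ^+ 4) -> c1 = 0.
Proof.
move=> p_ge0; apply/eqP; rewrite eq_le (nonneg_quartic_lin_ge0 p_ge0) andbT.
rewrite -oppr_ge0; apply: (@nonneg_quartic_lin_ge0 _ c2 (- c3) c4) => t.
by have := p_ge0 (- t); congr (0 <= _); ring.
Qed.

End NonnegQuartic.

Section Continuity.
Variable R : realType.

Lemma continuous_sum (T : topologicalType) (I : Type) (s : seq I)
    (F : I -> T -> R) :
  (forall i, continuous (F i)) -> continuous (fun x => \sum_(i <- s) F i x).
Proof.
move=> F_cont; elim: s => [|a s IHs].
  by under eq_fun do rewrite big_nil; exact: cst_continuous.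
under eq_fun do rewrite big_cons.
by move=> x; apply: continuousD; [exact: F_cont | exact: IHs].
Qed.

Lemma continuous_mul (T : topologicalType) (f g : T -> R) :
  continuous f -> continuous g -> continuous (fun x => f x * g x).
Proof. by move=> f_cont g_cont x; exact: (continuousM (f_cont x) (g_cont x)). Qed.

Lemma continuous_sub (T : topologicalType) (f g : T -> R) :
  continuous f -> continuous g -> continuous (fun x => f x - g x).
Proof. by move=> f_cont g_cont x; exact: (continuousB (f_cont x) (g_cont x)). Qed.

End Continuity.

Section Sphere.
Variables (R : realType) (n : nat).
Implicit Types (y z : 'I_n -> R).

Definition sqnorm y := \sum_(i < n) y i ^+ 2.
Definition scalev (c : R) y := fun i => c * y i.
Definition shift y (m : 'I_n) (t : R) := fun j => y j + t * (j == m)%:R.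

Lemma sqnorm_ge0 y : 0 <= sqnorm y.
Proof. by apply: sumr_ge0 => i _; exact: sqr_ge0. Qed.

Lemma sqnorm_eq0 y : sqnorm y = 0 -> forall i, y i = 0.
Proof.
move=> /eqP; rewrite psumr_eq0 => [/allP y0 i|i _]; last exact: sqr_ge0.
by apply/eqP; rewrite -sqrf_eq0; apply: y0; exact: mem_index_enum.
Qed.

Lemma unit_vec_dim_gt0 y : unit_vec y -> (0 < n)%N.
Proof.
by case: n y => // y; rewrite /unit_vec big_ord0 => /eqP; rewrite eq_sym oner_eq0.
Qed.

Lemma sqnorm_scale c y : sqnorm (scalev c y) = c ^+ 2 * sqnorm y.
Proof. by rewrite /sqnorm mulr_sumr; apply: eq_bigr => i _; rewrite exprMn. Qed.

Lemma sum_mul_delta (F : 'I_n -> R) m : \sum_(j < n) F j * (j == m)%:R = F m.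
Proof.
by rewrite (bigD1 m) //= eqxx mulr1 big1 ?addr0 // => j /negbTE ->; rewrite mulr0.
Qed.

Lemma sqnorm_shift y m t :
  sqnorm (shift y m t) = sqnorm y + t * (2 * y m) + t ^+ 2.
Proof.
transitivity (sqnorm y + t * (2 * \sum_(j < n) y j * (j == m)%:R)
   + t ^+ 2 * \sum_(j < n) (j == m)%:R * (j == m)%:R).
  rewrite /sqnorm /shift !mulr_sumr -!big_split.
  by apply: eq_bigr => j _ /=; ring.
by rewrite !sum_mul_delta eqxx mulr1.
Qed.

Lemma sqnorm_continuous (T : topologicalType) (h : T -> 'I_n -> R) :
  (forall i, continuous (fun x => h x i)) -> continuous (fun x => sqnorm (h x)).
Proof.
move=> h_cont; apply: continuous_sum => i; under eq_fun do rewrite expr2.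
exact: continuous_mul.
Qed.

Lemma exists_sphere_argmax (F : ('I_n -> R) -> R) :
  (0 < n)%N -> continuous (fun v : 'rV[R]_n => F (v ord0)) ->
  exists2 y, unit_vec y & forall z, unit_vec z -> F z <= F y.
Proof.
move=> n_gt0 F_cont.
have rowK z : (\row_i z i) ord0 = z :> ('I_n -> R).
  by apply/funext => i; rewrite mxE.
pose S := [set v : 'rV[R]_n | sqnorm (v ord0) = 1].
have S_neq0 : S !=set0.
  exists (\row_i shift (fun=> 0) (Ordinal n_gt0) 1 i); rewrite /S /= rowK.
  by rewrite sqnorm_shift /sqnorm big1 => [|i _]; rewrite ?expr0n //; ring.
have S_compact : compact S.
  apply: bounded_closed_compact.
    exists 1; split; first by rewrite num_real.
    move=> M M_gt1 v Sv.
    rewrite /= [X in X <= _]/Num.norm /= mx_normrE.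
    apply: bigmax_le => [|[a b] _ /=]; first by apply: ltW; apply: lt_trans M_gt1.
    rewrite (ord1 a); have vb_le1 : v ord0 b ^+ 2 <= 1.
      rewrite -Sv /sqnorm (bigD1 b) //= lerDl.
      by apply: sumr_ge0 => ? _; exact: sqr_ge0.
    apply: le_trans (ltW M_gt1); rewrite ler_norml; apply/andP; split; nra.
  have -> : S = (fun v : 'rV[R]_n => sqnorm (v ord0)) @^-1` [set 1] by [].
  apply: closed_comp => [v _|]; last exact: closed_eq.
  by apply: sqnorm_continuous => i; exact: coord_continuous.
have [c Sc c_max] := EVT_max_rV S_neq0 S_compact (continuous_subspaceT F_cont).
exists (c ord0); first by move: Sc; rewrite inE.
by move=> z z_unit; have := c_max (\row_i z i); rewrite !inE /S /= !rowK; apply.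
Qed.

End Sphere.

Section StationarySphereMax.
Variables (R : realType) (n : nat) (f : ('I_n -> R) -> R).
Variable g : ('I_n -> R) -> 'I_n -> R.
Implicit Types (y z : 'I_n -> R).
Hypothesis f_scale : forall c y, f (scalev c y) = c ^+ 4 * f y.
Hypothesis f_shift : forall y m, exists a2 a3 a4, forall t, f (shift y m t)
  = f y + t * (4 * g y m) + t ^+ 2 * a2 + t ^+ 3 * a3 + t ^+ 4 * a4.

Lemma sphere_bound_le_sqnorm l :
  (forall z, unit_vec z -> f z <= l) -> forall z, f z <= l * sqnorm z ^+ 2.
Proof.
move=> f_le z; have [s0|s_neq0] := eqVneq (sqnorm z) 0.
  have -> : f z = f (scalev 0 z).
    by congr f; apply/funext => i; rewrite /scalev mul0r sqnorm_eq0.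
  by rewrite f_scale s0 !expr0n /= mul0r mulr0.
have s_gt0 : 0 < sqnorm z by rewrite lt_def s_neq0 sqnorm_ge0.
pose c := (Num.sqrt (sqnorm z))^-1.
have c2 : c ^+ 2 = (sqnorm z)^-1 by rewrite exprVn sqr_sqrtr // ltW.
have cz_unit : unit_vec (scalev c z).
  by rewrite /unit_vec -/(sqnorm _) sqnorm_scale c2 mulVf.
have := f_le _ cz_unit; rewrite f_scale.
rewrite (_ : 4 = 2 * 2)%N // exprM c2 exprVn mulrC -ler_pdivlMr ?invrK //.
by rewrite invr_gt0 exprn_gt0.
Qed.

Lemma sphere_argmax_stationary y :
  unit_vec y -> (forall z, unit_vec z -> f z <= f y) ->
  forall m, g y m = f y * y m.
Proof.
(* f y * |.|^4 - f is nonnegative on the line y + t e_m and vanishes at t = 0,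
   so its coefficient of t vanishes. *)
move=> y_unit y_max m; have [a2 [a3 [a4 f_yt]]] := f_shift y m.
suff : 4 * (f y * y m) - 4 * g y m = 0 by lra.
apply: (@nonneg_quartic_lin_eq0 _ _ (f y * (4 * y m ^+ 2 + 2) - a2)
          (4 * f y * y m - a3) (f y - a4)) => t.
have := sphere_bound_le_sqnorm y_max (shift y m t).
rewrite sqnorm_shift f_yt (y_unit : sqnorm y = 1) -subr_ge0.
by congr (0 <= _); ring.
Qed.

Hypothesis f_cont : continuous (fun v : 'rV[R]_n => f (v ord0)).

Lemma exists_stationary_sphere_argmax : (0 < n)%N ->
  exists2 y, unit_vec y &
    (forall z, unit_vec z -> f z <= f y) /\ forall m, g y m = f y * y m.
Proof.
move=> n_gt0; have [y y_unit y_max] := exists_sphere_argmax n_gt0 f_cont.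
by exists y => //; split => //; exact: sphere_argmax_stationary.
Qed.

End StationarySphereMax.

Section QuarticForm.
Variables (R : realType) (n : nat).
Implicit Types (A : tensor3 R n) (T U : tensor4 R n) (y : 'I_n -> R).

(* contr2 A y = A y^2 and contr3 T y = T y^3 in the paper's notation; qgrad A y is
   S_A y^3 (contr3_S_of) and a quarter of the gradient of quartic A. *)
Definition contr2 A y i := \sum_(j < n) \sum_(k < n) A i j k * y j * y k.
Definition contr3 T y i :=
  \sum_(j < n) \sum_(k < n) \sum_(l < n) T i j k l * y j * y k * y l.
Definition quartic A y := sqnorm (contr2 A y).
Definition qgrad A y m := \sum_(i < n) contr2 A y i * \sum_(k < n) A i m k * y k.

Lemma quartic_ge0 A y : 0 <= quartic A y.
Proof. exact: sqnorm_ge0. Qed.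

Lemma quartic_scale A c y : quartic A (scalev c y) = c ^+ 4 * quartic A y.
Proof.
rewrite /quartic; have -> : contr2 A (scalev c y) = scalev (c ^+ 2) (contr2 A y).
  apply/funext => i; rewrite /scalev /contr2 mulr_sumr; apply: eq_bigr => j _.
  by rewrite mulr_sumr; apply: eq_bigr => k _; ring.
by rewrite sqnorm_scale -exprM.
Qed.

Lemma contr2_shift A y m t : piezo_type A ->
  forall i, contr2 A (shift y m t) i
    = contr2 A y i + t * (2 * \sum_(k < n) A i m k * y k) + t ^+ 2 * A i m m.
Proof.
move=> pA i.
transitivity (contr2 A y i
   + t * (\sum_(j < n) (\sum_(k < n) A i j k * y k) * (j == m)%:R
          + \sum_(j < n) y j * \sum_(k < n) A i j k * (k == m)%:R)
   + t ^+ 2 * \sum_(j < n) (\sum_(k < n) A i j k * (k == m)%:R) * (j == m)%:R).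
  rewrite /contr2 /shift !mulrDr !mulr_sumr -!big_split; apply: eq_bigr => j _ /=.
  rewrite !mulr_suml !mulr_sumr -!big_split; apply: eq_bigr => k _ /=; ring.
under [X in _ + t * (_ + X) + _]eq_bigr do rewrite sum_mul_delta -pA mulrC.
by rewrite !sum_mul_delta -mulr2n mulr_natl.
Qed.

Lemma quartic_shift A y m : piezo_type A ->
  exists a2 a3 a4, forall t, quartic A (shift y m t)
    = quartic A y + t * (4 * qgrad A y m)
      + t ^+ 2 * a2 + t ^+ 3 * a3 + t ^+ 4 * a4.
Proof.
move=> pA; pose h i := \sum_(k < n) A i m k * y k.
exists (\sum_(i < n) (4 * h i ^+ 2 + 2 * contr2 A y i * A i m m)),
       (\sum_(i < n) 4 * h i * A i m m), (\sum_(i < n) A i m m ^+ 2) => t.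
rewrite /quartic /sqnorm /qgrad !mulr_sumr -!big_split; apply: eq_bigr => i _ /=.
rewrite contr2_shift // -/(h i); ring.
Qed.

Lemma quartic_qgrad A y : quartic A y = \sum_(m < n) y m * qgrad A y m.
Proof.
under [RHS]eq_bigr do rewrite /qgrad mulr_sumr.
rewrite exchange_big; apply: eq_bigr => i _ /=.
rewrite expr2 [X in X * _]/contr2 mulr_suml; apply: eq_bigr => j _.
rewrite mulr_suml !mulr_sumr; apply: eq_bigr => k _; ring.
Qed.

Lemma contr3_sub4 T U y i : contr3 (sub4 T U) y i = contr3 T y i - contr3 U y i.
Proof.
rewrite /contr3 -sumrB; apply: eq_bigr => j _; rewrite -sumrB.
apply: eq_bigr => k _; rewrite -sumrB.
by apply: eq_bigr => l _; rewrite /sub4; ring.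
Qed.

Lemma contr3_swap23 T y i :
  contr3 (fun i j k l => T i k j l) y i = contr3 T y i.
Proof.
rewrite /contr3 exchange_big; apply: eq_bigr => j _; apply: eq_bigr => k _.
by apply: eq_bigr => l _; ring.
Qed.

Lemma contr3_rot T y i :
  contr3 (fun i j k l => T i l j k) y i = contr3 T y i.
Proof.
rewrite /contr3; under eq_bigr do rewrite exchange_big.
rewrite exchange_big; apply: eq_bigr => j _; apply: eq_bigr => k _.
by apply: eq_bigr => l _; ring.
Qed.

Lemma contr3_B_of A y m : contr3 (B_of A) y m = qgrad A y m.
Proof.
transitivity (\sum_(j < n) \sum_(i < n) \sum_(k < n) \sum_(l < n)
                A i m j * A i k l * y j * y k * y l).
  apply: eq_bigr => j _; under eq_bigr do under eq_bigr do rewrite !mulr_suml.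
  by under eq_bigr do rewrite exchange_big; rewrite exchange_big.
rewrite exchange_big; apply: eq_bigr => i _ /=.
rewrite mulrC mulr_suml; apply: eq_bigr => j _; rewrite mulr_sumr.
by apply: eq_bigr => k _; rewrite mulr_sumr; apply: eq_bigr => l _; ring.
Qed.

Lemma contr3_S_of A y m : contr3 (S_of A) y m = qgrad A y m.
Proof.
transitivity (3^-1 * (contr3 (B_of A) y m
   + contr3 (fun i j k l => B_of A i k j l) y m
   + contr3 (fun i j k l => B_of A i l j k) y m)).
  rewrite /contr3 !mulrDr !mulr_sumr -!big_split; apply: eq_bigr => j _.
  rewrite !mulr_sumr -!big_split; apply: eq_bigr => k _.
  rewrite !mulr_sumr -!big_split.
  by apply: eq_bigr => l _; rewrite /S_of /=; ring.
rewrite (contr3_swap23 (B_of A)) (contr3_rot (B_of A)) contr3_B_of.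
by field.
Qed.

Lemma quartic_continuous A : continuous (fun v : 'rV[R]_n => quartic A (v ord0)).
Proof.
apply: sqnorm_continuous => i.
apply: continuous_sum => j; apply: continuous_sum => k.
apply: continuous_mul; last exact: coord_continuous.
by apply: continuous_mul; [exact: cst_continuous | exact: coord_continuous].
Qed.

End QuarticForm.

Section Eigenvalues.
Variables (R : realType) (n : nat).
Implicit Types (A P Q : tensor3 R n) (T U : tensor4 R n) (y z : 'I_n -> R).

Lemma C_eigenvalueN A l : C_eigenvalue A l -> C_eigenvalue A (- l).
Proof.
move=> [x [y [x_unit [y_unit [eq_x eq_y]]]]].
exists (scalev (-1) x), y; split; [|split; [by []|split]].
- by rewrite /unit_vec -/(sqnorm _) sqnorm_scale sqrrN expr1n mul1r.
- by move=> i; rewrite eq_x /scalev; ring.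
- move=> i; rewrite mulNr -eq_y -sumrN; apply: eq_bigr => j _.
  by rewrite -sumrN; apply: eq_bigr => k _; rewrite /scalev; ring.
Qed.

Lemma lambda_Cmax_ge0 A l : is_lambda_Cmax A l -> 0 <= l.
Proof. by move=> [l_eig l_max]; have := l_max _ (C_eigenvalueN l_eig); lra. Qed.

Lemma C_eigenvalue_quartic A l :
  C_eigenvalue A l -> exists2 y, unit_vec y & quartic A y = l ^+ 2.
Proof.
move=> [x [y [x_unit [y_unit [eq_x _]]]]]; exists y => //.
rewrite /quartic (_ : contr2 A y = scalev l x); last exact/funext.
by rewrite sqnorm_scale (x_unit : sqnorm x = 1) mulr1.
Qed.

Lemma C_eigenvalue_sqrt_quartic A y :
  piezo_type A -> unit_vec y -> 0 < quartic A y ->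
  (forall m, qgrad A y m = quartic A y * y m) ->
  C_eigenvalue A (Num.sqrt (quartic A y)).
Proof.
move=> pA y_unit q_gt0 y_stat; set mu := Num.sqrt _.
have mu_gt0 : 0 < mu by rewrite sqrtr_gt0.
have mu2 : mu ^+ 2 = quartic A y by rewrite sqr_sqrtr // ltW.
exists (scalev mu^-1 (contr2 A y)), y; split; [|split; [by []|split]].
- rewrite /unit_vec -/(sqnorm _) sqnorm_scale -/(quartic A y) -mu2.
  by rewrite exprVn mulVf // sqrf_eq0 gt_eqF.
- by move=> i; rewrite /scalev mulrA mulfV ?gt_eqF ?mul1r.
- move=> i; transitivity (mu^-1 * qgrad A y i).
    rewrite /qgrad mulr_sumr; apply: eq_big => // j _.
    by rewrite mulrA mulr_sumr; apply: eq_big => // k _; rewrite /scalev pA; ring.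
  by rewrite y_stat -mu2; field; rewrite gt_eqF.
Qed.

Lemma quartic_le_lambda_Cmax A l : piezo_type A -> is_lambda_Cmax A l ->
  forall z, unit_vec z -> quartic A z <= l ^+ 2.
Proof.
move=> pA [l_eig l_max]; have [_ [y [_ [y_unit _]]]] := l_eig.
have [y' y'_unit [y'_max y'_stat]] :=
  exists_stationary_sphere_argmax (quartic_scale A)
    (fun y m => quartic_shift y m pA) (@quartic_continuous _ _ A)
    (unit_vec_dim_gt0 y_unit).
move=> z /y'_max /le_trans; apply.
have [q0|q_neq0] := eqVneq (quartic A y') 0; first by rewrite q0 sqr_ge0.
have q_gt0 : 0 < quartic A y' by rewrite lt_def q_neq0 quartic_ge0.
have := l_max _ (C_eigenvalue_sqrt_quartic pA y'_unit q_gt0 y'_stat).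
have := sqr_sqrtr (quartic_ge0 A y'); have := sqrtr_ge0 (quartic A y'); nra.
Qed.

Lemma Z_eigenvalue_sub4C T U l :
  Z_eigenvalue (sub4 T U) l -> Z_eigenvalue (sub4 U T) (- l).
Proof.
move=> [x [x_unit x_eig]]; exists x; split => // i.
rewrite -[LHS]/(contr3 _ x i) contr3_sub4 -opprB -contr3_sub4 mulNr.
by congr (- _); exact: x_eig.
Qed.

Lemma Z_eigenvalue_quartic_sub P Q l :
  Z_eigenvalue (sub4 (S_of P) (S_of Q)) l ->
  exists2 x, unit_vec x & quartic P x - quartic Q x = l.
Proof.
move=> [x [x_unit x_eig]]; exists x => //.
rewrite !quartic_qgrad -sumrB.
transitivity (l * sqnorm x); last by rewrite (x_unit : sqnorm x = 1) mulr1.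
rewrite /sqnorm mulr_sumr; apply: eq_bigr => m _.
rewrite -mulrBr -!contr3_S_of -contr3_sub4 [contr3 _ _ _]x_eig; ring.
Qed.

Lemma exists_quartic_sub_argmax P Q :
  piezo_type P -> piezo_type Q -> (0 < n)%N ->
  exists2 y, unit_vec y &
    Z_eigenvalue (sub4 (S_of P) (S_of Q)) (quartic P y - quartic Q y) /\
    forall z, unit_vec z ->
      quartic P z - quartic Q z <= quartic P y - quartic Q y.
Proof.
move=> pP pQ n_gt0.
pose f y := quartic P y - quartic Q y.
have f_scale c y : f (scalev c y) = c ^+ 4 * f y.
  by rewrite /f !quartic_scale mulrBr.
have f_shift y m : exists a2 a3 a4, forall t, f (shift y m t)
    = f y + t * (4 * (qgrad P y m - qgrad Q y m))
      + t ^+ 2 * a2 + t ^+ 3 * a3 + t ^+ 4 * a4.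
  have [p2 [p3 [p4 P_shift]]] := quartic_shift y m pP.
  have [q2 [q3 [q4 Q_shift]]] := quartic_shift y m pQ.
  exists (p2 - q2), (p3 - q3), (p4 - q4) => t.
  by rewrite /f P_shift Q_shift; ring.
have f_cont : continuous (fun v : 'rV[R]_n => f (v ord0)).
  exact: continuous_sub (@quartic_continuous _ _ P) (@quartic_continuous _ _ Q).
have [y y_unit [y_max y_stat]] :=
  exists_stationary_sphere_argmax f_scale f_shift f_cont n_gt0.
exists y => //; split => //; exists y; split => // m.
by rewrite -[LHS]/(contr3 _ y m) contr3_sub4 !contr3_S_of y_stat.
Qed.

Lemma quartic_sub_le_lambda_Zmax P Q l :
  piezo_type P -> piezo_type Q -> is_lambda_Zmax (sub4 (S_of P) (S_of Q)) l ->
  forall z, unit_vec z -> quartic P z - quartic Q z <= l.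
Proof.
move=> pP pQ [[x [x_unit _]] l_max].
have [y _ [y_eig y_max]] :=
  exists_quartic_sub_argmax pP pQ (unit_vec_dim_gt0 x_unit).
by move=> z /y_max /le_trans; apply; exact: l_max.
Qed.

Lemma lambda_Zmin_le_quartic_sub P Q l :
  piezo_type P -> piezo_type Q -> is_lambda_Zmin (sub4 (S_of P) (S_of Q)) l ->
  forall z, unit_vec z -> l <= quartic P z - quartic Q z.
Proof.
move=> pP pQ [[x [x_unit _]] l_min].
have [y _ [y_eig y_max]] :=
  exists_quartic_sub_argmax pQ pP (unit_vec_dim_gt0 x_unit).
move=> z /y_max; have := l_min _ (Z_eigenvalue_sub4C y_eig); lra.
Qed.

End Eigenvalues.

Theorem theorem2p2 (R : realType) (n : nat) (A E : tensor3 R n)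
  (lA lAt zmin zmax : R) :
  piezo_type A -> piezo_type (add3 A E) ->
  is_lambda_Cmax A lA -> is_lambda_Cmax (add3 A E) lAt ->
  is_lambda_Zmin (sub4 (S_of (add3 A E)) (S_of A)) zmin ->
  is_lambda_Zmax (sub4 (S_of (add3 A E)) (S_of A)) zmax ->
  [/\ 0 <= lA ^+ 2 + zmin, 0 <= lA ^+ 2 + zmax,
      Num.sqrt (lA ^+ 2 + zmin) <= lAt
    & lAt <= Num.sqrt (lA ^+ 2 + zmax)].
Proof.
move=> pA pAt CA CAt Zmin Zmax.
have lAt_ge0 := lambda_Cmax_ge0 CAt.
have [y y_unit qy] := C_eigenvalue_quartic CA.1.
have [yt yt_unit qyt] := C_eigenvalue_quartic CAt.1.
have upper : lAt ^+ 2 <= lA ^+ 2 + zmax.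
  have := quartic_le_lambda_Cmax pA CA yt_unit.
  have := quartic_sub_le_lambda_Zmax pAt pA Zmax yt_unit; lra.
have lower : lA ^+ 2 + zmin <= lAt ^+ 2.
  have := quartic_le_lambda_Cmax pAt CAt y_unit.
  have := lambda_Zmin_le_quartic_sub pAt pA Zmin y_unit; lra.
have zmin_ge0 : 0 <= lA ^+ 2 + zmin.
  have [x x_unit qx] := Z_eigenvalue_quartic_sub Zmin.1.
  have := quartic_le_lambda_Cmax pA CA x_unit.
  have := quartic_ge0 (add3 A E) x; lra.
have zmax_ge0 : 0 <= lA ^+ 2 + zmax by have := sqr_ge0 lAt; lra.
by split => //; rewrite -(ger0_norm lAt_ge0) -sqrtr_sqr ler_wsqrtr.
Qed.
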